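(* Let $B$ be a finite set of Boolean functions. Then there exists a monadic second-order (MSO) formula $\theta_{\mathit{sat}}$ over the vocabulary $\tau_{B,\mathit{prop}}$ such that for every set $\Gamma$ of propositional $B$-formulae it holds that $\Gamma$ is satisfiable if and only if $\mathcal{A}_\Gamma \models \theta_{\mathit{sat}}$.
   Context: For a finite set $B$ of Boolean functions, a $B$-formula is a propositional formula built from propositional variables by applying functions $f\in B$ (0-ary functions of $B$ act as constants). Let $\tau_B$ be the vocabulary consisting of a unary relation symbol $\mathrm{const}_f$ for each $f\in B$ of arity $0$ and a binary relation symbol $\mathrm{conn}_{f,i}$ for each $f\in B$ and each $1\le i\le \mathrm{arity}(f)$. Let $\tau_{B,\mathit{prop}}=\tau_B\cup\{\mathrm{var},\mathrm{repr}\}$ with $\mathrm{var},\mathrm{repr}$ unary. For a set $\Gamma$ of $B$-formulae, $\mathcal{A}_\Gamma$ is the $\tau_{B,\mathit{prop}}$-structure whose universe is the set of subformulae of the formulae in $\Gamma$, where $\mathrm{var}(x)$ holds iff $x$ is a variable, $\mathrm{repr}(x)$ holds iff $x\in\Gamma$, $\mathrm{const}_f(x)$ holds iff $x$ is the constant $f$, and $\mathrm{conn}_{f,i}(x,y)$ holds iff $x$ is the $i$-th argument of the function $f$ at the root of the formula $y$. *)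

From mathcomp Require Import all_boot.
From Stdlib Require List.

Set Implicit Arguments.
Unset Strict Implicit.
Unset Printing Implicit Defensive.

(* The finite set B of Boolean functions is given as a finite index    *)
(* type I, an arity map ar : I -> nat, and for each i : I the Boolean   *)
(* function fn i : (ar i).-tuple bool -> bool.  0-ary functions are the *)
(* constants.                                                           *)

Inductive form (I : Type) : Type :=
  | FVar : nat -> form I
  | FApp : I -> seq (form I) -> form I.
Arguments FVar {I} _.
Arguments FApp {I} _ _.

Fixpoint wf (I : Type) (ar : I -> nat) (g : form I) : bool :=
  match g with
  | FVar _ => true
  | FApp i args => (size args == ar i) && all (wf ar) args
  end.

Fixpoint eval (I : Type) (ar : I -> nat)
    (fn : forall i, (ar i).-tuple bool -> bool) (v : nat -> bool) (g : form I)
    : bool :=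
  match g with
  | FVar n => v n
  | FApp i args =>
      let bs := map (eval fn v) args in
      if insub bs is Some t then fn i t else false
  end.

Definition satisfiable (I : Type) (ar : I -> nat)
    (fn : forall i, (ar i).-tuple bool -> bool) (Gamma : form I -> Prop) : Prop :=
  exists v : nat -> bool, forall g, Gamma g -> eval fn v g = true.

Inductive subf (I : Type) : form I -> form I -> Prop :=
  | subf_refl g : subf g g
  | subf_arg x i args a : List.In a args -> subf x a -> subf x (FApp i args).

Record vocab := Vocab { vsym : Type; varity : vsym -> nat }.

Record structure (V : vocab) := Structure {
  carrier :> Type;
  interp : forall s : vsym V, (varity s).-tuple carrier -> Prop }.

Inductive mso (V : vocab) : Type :=
  | MAtom (s : vsym V) (xs : (varity s).-tuple nat)
  | MEq (x y : nat)
  | MMem (x X : nat)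
  | MNot (phi : mso V)
  | MAnd (phi psi : mso V)
  | MEx1 (x : nat) (phi : mso V)
  | MEx2 (X : nat) (phi : mso V).

Fixpoint fv1 (V : vocab) (phi : mso V) : seq nat :=
  match phi with
  | MAtom _ xs => tval xs
  | MEq x y => [:: x; y]
  | MMem x _ => [:: x]
  | MNot p => fv1 p
  | MAnd p q => fv1 p ++ fv1 q
  | MEx1 x p => [seq y <- fv1 p | y != x]
  | MEx2 _ p => fv1 p
  end.

Fixpoint fv2 (V : vocab) (phi : mso V) : seq nat :=
  match phi with
  | MAtom _ _ | MEq _ _ => [::]
  | MMem _ X => [:: X]
  | MNot p => fv2 p
  | MAnd p q => fv2 p ++ fv2 q
  | MEx1 _ p => fv2 p
  | MEx2 X p => [seq Y <- fv2 p | Y != X]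
  end.

Definition sentence (V : vocab) (phi : mso V) : Prop :=
  fv1 phi = [::] /\ fv2 phi = [::].

(* Semantics.  First-order assignments are partial (option-valued) so that
   the empty structure is handled correctly; set variables range over all
   subsets of the universe. *)
Fixpoint msat (V : vocab) (A : structure V) (fo : nat -> option A)
    (so : nat -> A -> Prop) (phi : mso V) : Prop :=
  match phi with
  | MAtom s xs => exists ys : (varity s).-tuple A,
      map Some (tval ys) = map fo (tval xs) /\ interp ys
  | MEq x y => exists a : A, fo x = Some a /\ fo y = Some a
  | MMem x X => exists a : A, fo x = Some a /\ so X a
  | MNot p => ~ msat fo so p
  | MAnd p q => msat fo so p /\ msat fo so q
  | MEx1 x p => exists a : A,
      msat (fun y => if y == x then Some a else fo y) so p
  | MEx2 X p => exists P : A -> Prop,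
      msat fo (fun Y => if Y == X then P else so Y) p
  end.

Definition models (V : vocab) (A : structure V) (theta : mso V) : Prop :=
  @msat V A (fun _ => None) (fun _ _ => False) theta.

Inductive symB (I : Type) (ar : I -> nat) : Type :=
  | SConst (i : I) (_ : ar i = 0)
  | SConn (i : I) (k : 'I_(ar i))
  | SVar
  | SRepr.

Definition arityB (I : Type) (ar : I -> nat) (s : symB ar) : nat :=
  match s with
  | SConst _ _ => 1
  | SConn _ _ => 2
  | SVar | SRepr => 1
  end.

Definition tauBprop (I : Type) (ar : I -> nat) : vocab :=
  Vocab (@arityB I ar).

Definition univ (I : Type) (Gamma : form I -> Prop) : Type :=
  {x : form I | exists g, Gamma g /\ subf x g}.

Definition interpA (I : Type) (ar : I -> nat) (Gamma : form I -> Prop)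
    (s : symB ar) : (arityB s).-tuple (univ Gamma) -> Prop :=
  match s return (arityB s).-tuple (univ Gamma) -> Prop with
  | SConst i _ => fun t => proj1_sig (tnth t (inord 0)) = FApp i [::]
  | SConn i k => fun t =>
      (* x = t_0 is the (k+1)-th argument of f = i at the root of y = t_1 *)
      exists args, proj1_sig (tnth t (inord 1)) = FApp i args /\
                   nth (FVar 0) args k = proj1_sig (tnth t (inord 0))
  | SVar => fun t => exists n, proj1_sig (tnth t (inord 0)) = FVar n
  | SRepr => fun t => Gamma (proj1_sig (tnth t (inord 0)))
  end.

Definition A_Gamma (I : Type) (ar : I -> nat) (Gamma : form I -> Prop)
    : structure (tauBprop ar) :=
  @Structure (tauBprop ar) (univ Gamma) (@interpA I ar Gamma).

(* The MSO sentence guesses the set X of subformulae that are true under a satisfying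
   assignment.  It requires X to contain every formula of Gamma and to be locally
   consistent with the truth tables: for every node labelled f whose arguments have
   X-membership pattern t, the node is in X iff f(t) holds.  A satisfying assignment
   yields such an X; conversely an X gives the assignment "n is true iff the variable
   n is in X", and induction on formulae shows that X is then exactly the set of true
   subformulae. *)
From mathcomp Require Import all_boot.
From Stdlib Require Import Classical ClassicalEpsilon ProofIrrelevance.
From Stdlib Require List.

Set Implicit Arguments.
Unset Strict Implicit.
Unset Printing Implicit Defensive.

Section DerivedConnectives.
Variable V : vocab.
Implicit Types p q : mso V.

Definition mtrue : mso V := MNot (MEx1 0 (MNot (MEq V 0 0))).
Definition mimp (p q : mso V) : mso V := MNot (MAnd p (MNot q)).
Definition mall (x : nat) (p : mso V) : mso V := MNot (MEx1 x (MNot p)).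
Definition mlit (b : bool) (p : mso V) : mso V := if b then p else MNot p.
Definition mbigand (T : Type) (s : seq T) (F : T -> mso V) : mso V :=
  foldr (fun x acc => MAnd (F x) acc) mtrue s.

Lemma fv1_mlit b p : fv1 (mlit b p) = fv1 p. Proof. by case: b. Qed.
Lemma fv2_mlit b p : fv2 (mlit b p) = fv2 p. Proof. by case: b. Qed.

Lemma fv1_MEx1_sub x s p : {subset fv1 p <= x :: s} -> {subset fv1 (MEx1 x p) <= s}.
Proof.
by move=> sub y; rewrite mem_filter => /andP[ney /sub]; rewrite inE (negbTE ney).
Qed.

Lemma fv1_mall_sub x s p : {subset fv1 p <= x :: s} -> {subset fv1 (mall x p) <= s}.
Proof. exact: fv1_MEx1_sub. Qed.

Lemma fv2_MEx2_sub X s p : {subset fv2 p <= X :: s} -> {subset fv2 (MEx2 X p) <= s}.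
Proof.
by move=> sub Y; rewrite mem_filter => /andP[neY /sub]; rewrite inE (negbTE neY).
Qed.

Lemma fv1_mbigand_sub (T : Type) (s : seq nat) (r : seq T) F :
  (forall x, {subset fv1 (F x) <= s}) -> {subset fv1 (mbigand r F) <= s}.
Proof. by move=> sub; elim: r => //= x r IH y; rewrite mem_cat => /orP[/sub|/IH]. Qed.

Lemma fv2_mbigand_sub (T : Type) (s : seq nat) (r : seq T) F :
  (forall x, {subset fv2 (F x) <= s}) -> {subset fv2 (mbigand r F) <= s}.
Proof. by move=> sub; elim: r => //= x r IH y; rewrite mem_cat => /orP[/sub|/IH]. Qed.

Variable A : structure V.
Implicit Types (fo : nat -> option A) (so : nat -> A -> Prop).

Definition upd fo (x : nat) (a : A) : nat -> option A :=
  fun y => if y == x then Some a else fo y.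

Lemma upd_same fo x a : upd fo x a x = Some a.
Proof. by rewrite /upd eqxx. Qed.

Lemma msat_MAnd fo so p q : msat fo so (MAnd p q) <-> msat fo so p /\ msat fo so q.
Proof. by []. Qed.

Lemma msat_MEx2 fo so X p :
  msat fo so (MEx2 X p) <-> exists P : A -> Prop, msat fo (fun Y => if Y == X then P else so Y) p.
Proof. by []. Qed.

Lemma msat_mtrue fo so : msat fo so mtrue.
Proof. by move=> /= [a]; apply; exists a. Qed.

Lemma msat_mimp fo so p q : msat fo so (mimp p q) <-> (msat fo so p -> msat fo so q).
Proof.
split=> /= [nPnQ Hp | PQ [Hp nQ]]; last exact/nQ/PQ.
by apply: NNPP => nQ; apply: nPnQ.
Qed.

Lemma msat_mall fo so x p :
  msat fo so (mall x p) <->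
  forall a : A, msat (upd fo x a) so p.
Proof.
split=> [nEx a | Hall [a na]]; last exact: na (Hall a).
by apply: NNPP => np; apply: nEx; exists a.
Qed.

Lemma msat_mlit fo so b p : msat fo so (mlit b p) <-> (msat fo so p <-> b).
Proof. by case: b => /=; intuition. Qed.

Lemma msat_mbigand (T : eqType) (r : seq T) F fo so :
  msat fo so (mbigand r F) <-> forall x, x \in r -> msat fo so (F x).
Proof.
elim: r => [|y r IH] /=; first by split=> // _; apply: msat_mtrue.
rewrite IH; split=> [[Fy Fr] x | Fr]; first by rewrite inE => /predU1P[-> | /Fr].
by split=> [|x xr]; apply: Fr; rewrite inE ?eqxx ?xr ?orbT.
Qed.

Lemma msat_MMem fo so x X a : fo x = Some a -> (msat fo so (MMem V x X) <-> so X a).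
Proof. by move=> /= fx; split=> [[b []]|]; [rewrite fx => -[<-] | exists a]. Qed.

Lemma msat_MAtom fo so s (xs : (varity s).-tuple nat) (ys : (varity s).-tuple A) :
  map fo xs = map Some ys -> (msat fo so (MAtom xs) <-> interp ys).
Proof.
move=> /= ->; split=> [[zs [/(inj_map Some_inj)/val_inj -> //]] | ?].
by exists ys.
Qed.

End DerivedConnectives.

Lemma tnth_inord (T : Type) n (t : n.+1.-tuple T) k x0 :
  k <= n -> tnth t (inord k) = nth x0 t k.
Proof. by move=> le_kn; rewrite (tnth_nth x0) inordK. Qed.

Lemma form_nested_ind (I : Type) (P : form I -> Prop) :
  (forall n, P (FVar n)) ->
  (forall i args, (forall a, List.In a args -> P a) -> P (FApp i args)) ->
  forall g, P g.
Proof.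
move=> Pvar Papp; fix IH 1 => -[n | i args]; first exact: Pvar.
apply: Papp; elim: args => [|a args IHargs] b /=; first by case.
case=> [<- | /IHargs Pb]; [exact: IH | exact: Pb].
Qed.

Lemma subf_trans (I : Type) (x y z : form I) : subf x y -> subf y z -> subf x z.
Proof. by move=> + syz; elim: syz => // {}y i args a a_in _ IH /IH; apply: subf_arg. Qed.

Lemma subf_wf (I : Type) (ar : I -> nat) (x g : form I) : subf x g -> wf ar g -> wf ar x.
Proof.
elim=> // {}g i args a a_in _ IH /= /andP[_ wf_args]; apply: IH.
by elim: args a_in wf_args => //= b args IHargs [<- /andP[] | /IHargs + /andP[]].
Qed.

Lemma In_nth (T : Type) (s : seq T) k x0 : k < size s -> List.In (nth x0 s k) s.
Proof. by elim: s k => [|x s IH] [|k] //= lt_ks; [left | right; apply: IH]. Qed.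

Lemma eval_FApp (I : Type) (ar : I -> nat) fn v i args (t : (ar i).-tuple bool) :
  map (eval fn v) args = t -> eval fn v (FApp i args) = fn i t.
Proof. by move=> /= ->; rewrite valK. Qed.

Section SatisfiabilitySentence.
Variables (I : finType) (ar : I -> nat) (fn : forall i : I, (ar i).-tuple bool -> bool).
Local Notation V := (tauBprop ar).

(* [cond t] says of the node x0 that its root is labelled i and that its k-th argument
   is in the set X0 iff [tnth t k]; a constant needs its own atom since the
   conjunction over its (zero) arguments would be vacuous. *)
Definition cond (i : I) (t : (ar i).-tuple bool) : mso V :=
  match eq_comparable (ar i) 0 with
  | left ar0 => @MAtom V (SConst ar0) [tuple 0]
  | right _ => mbigand (enum 'I_(ar i)) (fun k =>
       MEx1 1 (MAnd (@MAtom V (SConn k) [tuple 1; 0]) (mlit (tnth t k) (MMem V 1 0))))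
  end.

Definition theta_sat : mso V :=
  MEx2 0 (MAnd (mall 0 (mimp (@MAtom V (SRepr ar) [tuple 0]) (MMem V 0 0)))
    (mbigand (enum I) (fun i => mbigand (enum {: (ar i).-tuple bool}) (fun t =>
       mall 0 (mimp (cond t) (mlit (fn t) (MMem V 0 0))))))).

Lemma fv1_cond i (t : (ar i).-tuple bool) : {subset fv1 (cond t) <= [:: 0]}.
Proof.
rewrite /cond; case: eq_comparable => [ar0 | _] //.
apply: fv1_mbigand_sub => k; apply: fv1_MEx1_sub => y.
by rewrite /= fv1_mlit !inE => /or3P[] /eqP ->.
Qed.

Lemma fv2_cond i (t : (ar i).-tuple bool) : {subset fv2 (cond t) <= [:: 0]}.
Proof.
rewrite /cond; case: eq_comparable => [ar0 | _] //.
by apply: fv2_mbigand_sub => k y; rewrite /= fv2_mlit.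
Qed.

Lemma subset_nil (s : seq nat) : {subset s <= [::]} -> s = [::].
Proof. by case: s => // y s /(_ y (mem_head _ _)). Qed.

Lemma theta_sat_sentence : sentence theta_sat.
Proof.
split; apply: subset_nil.
- apply: fv1_mbigand_sub => i; apply: fv1_mbigand_sub => t; apply: fv1_mall_sub => y.
  by rewrite /= mem_cat fv1_mlit => /orP[/fv1_cond|].
- apply: fv2_MEx2_sub => y; rewrite /= inE => /predU1P[-> // |]; move: y.
  apply: fv2_mbigand_sub => i; apply: fv2_mbigand_sub => t z.
  by rewrite /= mem_cat fv2_mlit => /orP[/fv2_cond|].
Qed.

Definition root_pattern (Q : form I -> Prop) (g : form I) i (t : (ar i).-tuple bool) :=
  exists args, g = FApp i args /\
    forall k : 'I_(ar i), Q (nth (FVar 0) args k) <-> tnth t k.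

Lemma root_pattern_evalE v (Q : form I -> Prop) i args (t : (ar i).-tuple bool) :
  size args = ar i -> (forall a, List.In a args -> Q a <-> eval fn v a) ->
  root_pattern Q (FApp i args) t <-> map (eval fn v) args = t.
Proof.
move=> size_args QE; split=> [[_ [[= <-] pat]] | eval_args].
- apply: (@eq_from_nth _ false); first by rewrite size_map size_tuple.
  move=> k; rewrite size_map size_args => lt_k.
  have := pat (Ordinal lt_k); rewrite (tnth_nth false) /= (nth_map (FVar 0)) ?size_args //.
  rewrite QE; last by apply: In_nth; rewrite size_args.
  by move=> evalE; apply/idP/idP => /evalE.
- rewrite /root_pattern; exists args; split=> // k.
  have lt_k : k < size args by rewrite size_args.
  rewrite QE; last exact: In_nth.
  by rewrite (tnth_nth false) -eval_args (nth_map (FVar 0)).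
Qed.

Section Structure.
Variable Gamma : form I -> Prop.
Hypothesis Gamma_wf : forall g, Gamma g -> wf ar g.
Local Notation A := (A_Gamma ar Gamma).
Implicit Types (fo : nat -> option A) (so : nat -> A -> Prop).

Definition in_univ (g : form I) : Prop := exists g0, Gamma g0 /\ subf g g0.

Lemma in_univ_arg i args a : in_univ (FApp i args) -> List.In a args -> in_univ a.
Proof.
move=> [g0 [Gg0 sub]] a_in; exists g0; split=> //.
by apply: subf_trans sub; apply: subf_arg a_in (subf_refl _).
Qed.

Lemma univ_wf (a : A) : wf ar (sval a).
Proof. by case: a => g /= [g0 [/Gamma_wf wf0 sub]]; apply: subf_wf sub wf0. Qed.

Definition lift_pred (P : A -> Prop) (g : form I) : Prop := exists a : A, sval a = g /\ P a.

Lemma lift_pred_sval P (a : A) : lift_pred P (sval a) <-> P a.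
Proof.
split=> [[[g hg] [/= E Pb]] | Pa]; last by exists a.
by case: a E Pb => g' hg' /= E; subst g'; rewrite (proof_irrelevance _ hg hg').
Qed.

Lemma msat_repr fo so a : fo 0 = Some a ->
  msat fo so (@MAtom V (SRepr ar) [tuple 0]) <-> Gamma (sval a).
Proof.
move=> fa; rewrite (msat_MAtom so (s := SRepr ar) (ys := [tuple a])) /= ?fa //.
by rewrite (tnth_inord _ a).
Qed.

Lemma msat_const fo so i (ar0 : ar i = 0) a : fo 0 = Some a ->
  msat fo so (@MAtom V (SConst ar0) [tuple 0]) <-> sval a = FApp i [::].
Proof.
move=> fa; rewrite (msat_MAtom so (s := SConst ar0) (ys := [tuple a])) /= ?fa //.
by rewrite (tnth_inord _ a).
Qed.

Lemma msat_conn fo so i (k : 'I_(ar i)) a b : fo 0 = Some a -> fo 1 = Some b ->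
  msat fo so (@MAtom V (SConn k) [tuple 1; 0]) <->
  exists args, sval a = FApp i args /\ nth (FVar 0) args k = sval b.
Proof.
move=> fa fb; rewrite (msat_MAtom so (s := SConn k) (ys := [tuple b; a])) /= ?fa ?fb //.
by rewrite !(tnth_inord _ a).
Qed.

Lemma msat_cond_arg fo so i (t : (ar i).-tuple bool) (k : 'I_(ar i)) a : fo 0 = Some a ->
  msat fo so (MEx1 1 (MAnd (@MAtom V (SConn k) [tuple 1; 0]) (mlit (tnth t k) (MMem V 1 0)))) <->
  exists b : A, (exists args, sval a = FApp i args /\ nth (FVar 0) args k = sval b) /\
                (so 0 b <-> tnth t k).
Proof.
move=> fa; split=> -[b [conn_b lit_b]]; exists b;
  have fa' : upd fo 1 b 0 = Some a := fa;
  have connE := msat_conn so k fa' (upd_same _ _ _);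
  have memE := msat_MMem so 0 (upd_same fo 1 b).
- by split; [apply/connE | apply: iff_trans (iff_sym memE) _; apply/msat_mlit].
- by split; [apply/connE | apply/msat_mlit; apply: iff_trans memE _].
Qed.

Lemma msat_cond fo so i (t : (ar i).-tuple bool) a : fo 0 = Some a ->
  msat fo so (cond t) <-> root_pattern (lift_pred (so 0)) (sval a) t.
Proof.
move=> fa; rewrite /cond; case: eq_comparable => [ar0 | ar_neq0].
  rewrite (msat_const so ar0 fa); split=> [-> | [args [Ea _]]].
    by exists [::]; split=> // k; move: (ltn_ord k); rewrite {2}ar0.
  by have := univ_wf a; rewrite Ea /= ar0 => /andP[/eqP/size0nil ->].
rewrite msat_mbigand; split=> [args_k | [args [Ea pat]] k _].
  have lt0 : 0 < ar i by rewrite lt0n; apply/eqP.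
  have /(msat_cond_arg _ _ _ fa) [_ [[args [Ea _]] _]] := args_k (Ordinal lt0) (mem_enum _ _).
  exists args; split=> // k.
  have /(msat_cond_arg _ _ _ fa) [b [[args' [Ea' nth_b]] so_b]] := args_k k (mem_enum _ _).
  have args'E : args' = args by move: Ea'; rewrite Ea => -[].
  by rewrite -args'E nth_b lift_pred_sval.
have lt_k : k < size args by move: (univ_wf a); rewrite Ea /= => /andP[/eqP ->].
have h : in_univ (nth (FVar 0) args k).
  by apply: (@in_univ_arg i args); [rewrite -Ea; exact: proj2_sig a | exact: In_nth].
apply/(msat_cond_arg _ _ _ fa); exists (exist _ _ h); split; first by exists args.
by rewrite -lift_pred_sval; apply: pat.
Qed.

Lemma models_theta_satE : models A theta_sat <->
  exists P : A -> Prop, (forall a : A, Gamma (sval a) -> P a) /\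
    forall i (t : (ar i).-tuple bool) (a : A),
      root_pattern (lift_pred P) (sval a) t -> (P a <-> fn t).
Proof.
rewrite /models /theta_sat msat_MEx2.
split=> -[P].
  move=> /msat_MAnd [reprP condP]; exists P; split.
  - move=> a; move/msat_mall: reprP => /(_ a)/msat_mimp.
    by rewrite (msat_repr _ (upd_same _ _ _)) (msat_MMem _ _ (upd_same _ _ _)).
  - move=> i t a; move/msat_mbigand: condP => /(_ i (mem_enum _ _)).
    move/msat_mbigand => /(_ t (mem_enum _ _))/msat_mall/(_ a)/msat_mimp.
    by rewrite (msat_cond _ _ (upd_same _ _ _)) msat_mlit (msat_MMem _ _ (upd_same _ _ _)).
move=> [reprP condP]; exists P; apply/msat_MAnd; split.
- apply/msat_mall => a; apply/msat_mimp.
  by rewrite (msat_repr _ (upd_same _ _ _)) (msat_MMem _ _ (upd_same _ _ _)); apply: reprP.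
- apply/msat_mbigand => i _; apply/msat_mbigand => t _; apply/msat_mall => a; apply/msat_mimp.
  rewrite (msat_cond _ _ (upd_same _ _ _)) msat_mlit (msat_MMem _ _ (upd_same _ _ _)).
  exact: condP.
Qed.

Lemma models_of_satisfiable : satisfiable fn Gamma -> models A theta_sat.
Proof.
move=> [v sat_v]; apply/models_theta_satE.
exists (fun a : A => eval fn v (sval a)); split=> [a /sat_v // | i t [g h] /= pat].
have [args [Eg _]] := pat; subst g.
have size_args : size args = ar i by have /andP[/eqP] := univ_wf (exist _ _ h).
suff eval_args : map (eval fn v) args = t by rewrite -(eval_FApp eval_args).
have liftE b : List.In b args -> lift_pred (fun a : A => eval fn v (sval a)) b <-> eval fn v b.
  by move=> b_in; apply: (lift_pred_sval _ (exist _ b (in_univ_arg h b_in))).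
exact: (root_pattern_evalE t size_args liftE).1 pat.
Qed.

Definition assignment_of (P : A -> Prop) (n : nat) : bool :=
  if excluded_middle_informative (lift_pred P (FVar n)) then true else false.

Lemma eval_assignment_of (P : A -> Prop) :
  (forall i (t : (ar i).-tuple bool) (a : A),
     root_pattern (lift_pred P) (sval a) t -> (P a <-> fn t)) ->
  forall g, in_univ g -> (eval fn (assignment_of P) g <-> lift_pred P g).
Proof.
move=> condP; elim/form_nested_ind => [n | i args IH] h.
  by rewrite /= /assignment_of; case: excluded_middle_informative => [Pn | nPn]; split=> // /nPn.
have size_args : size args = ar i by have /andP[/eqP] := univ_wf (exist _ _ h).
have size_eval : size (map (eval fn (assignment_of P)) args) == ar i.
  by rewrite size_map size_args.
rewrite (eval_FApp (t := Tuple size_eval)) // -[FApp i args]/(sval (exist _ _ h : A)).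
have liftE b : List.In b args -> lift_pred P b <-> eval fn (assignment_of P) b.
  by move=> b_in; apply: iff_sym (IH b b_in (in_univ_arg h b_in)).
rewrite lift_pred_sval; apply: iff_sym; apply: condP.
exact: (root_pattern_evalE (Tuple size_eval) size_args liftE).2 erefl.
Qed.

Lemma satisfiable_of_models : models A theta_sat -> satisfiable fn Gamma.
Proof.
move=> /models_theta_satE [P [reprP condP]]; exists (assignment_of P) => g Gg.
have h : in_univ g by exists g; split=> //; apply: subf_refl.
by apply/(eval_assignment_of condP h); exists (exist _ g h); split=> //; apply: reprP.
Qed.

End Structure.
End SatisfiabilitySentence.

Theorem lemma1 (I : finType) (ar : I -> nat)
    (fn : forall i : I, (ar i).-tuple bool -> bool) :
  exists theta_sat : mso (tauBprop ar),
    sentence theta_sat /\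
    forall Gamma : form I -> Prop,
      (forall g, Gamma g -> wf ar g) ->
      (satisfiable fn Gamma <-> models (A_Gamma ar Gamma) theta_sat).
Proof.
exists (theta_sat fn); split; first exact: theta_sat_sentence.
move=> Gamma Gamma_wf; split; first exact: models_of_satisfiable.
exact: satisfiable_of_models.
Qed.
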